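(* If $\Delta;\Gamma\vdash M:A$ and $\Delta\vdash M\triangleright^*N$ in DCC, then $M^\circ\triangleright^*N^\circ$ in CC.
   Context: DCC: expressions $x\mid U_i\mid\Pi x{:}A.B\mid L@M\mid\ell_i\{\overline M\}$; label contexts $\Delta::=\cdot\mid\Delta,\ell_i(\{\overline x{:}\overline A\},x{:}A\mapsto L:B)$; substitution with $\ell\{\overline M\}[N/x]=\ell\{\overline{M[N/x]}\}$; reduction $\Delta\vdash\ell\{\overline M\}@N\triangleright L[\overline M/\overline x,N/x]$ when $\ell(\{\overline x{:}\overline A\},x{:}A\mapsto L:B)\in\Delta$, $\triangleright^*$ zero or more steps; typing $\Delta;\Gamma\vdash M:A$ by CC-style rules for variables, $U_i:U_{i+1}$, $\Pi$, application $M@N:B[N/x]$, conversion, plus: if $\Delta;\Gamma$ well formed, $\ell(\{\overline x{:}\overline A\},x{:}A\mapsto M:B)\in\Delta$, $|\overline M|=|\overline x|$, $\Delta;\Gamma\vdash M_k:A_k[M_1/x_1,\dots,M_{k-1}/x_{k-1}]$ for all $k$, then $\Delta;\Gamma\vdash\ell\{\overline M\}:\Pi x{:}A[\overline M/\overline x].B[\overline M/\overline x]$. CC: expressions $x\mid U_i\mid\Pi x{:}A.B\mid L\,M\mid\lambda x{:}A.M$, reduction $(\lambda x{:}A.N)\,M\triangleright N[M/x]$. Backward transformation (relative to $\Delta$, on well-typed terms): $x^\circ=x$, $U_i^\circ=U_i$, $(\Pi x{:}A.B)^\circ=\Pi x{:}A^\circ.B^\circ$, $(M@N)^\circ=M^\circ\,N^\circ$,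 $(\ell\{\overline M\})^\circ=\lambda x{:}A^\circ[\overline{M^\circ}/\overline x].\,L^\circ[\overline{M^\circ}/\overline x]$ where $\ell(\{\overline x{:}\overline A\},x{:}A\mapsto L:B)\in\Delta$. *)

(* DCC (defunctionalized CC with label contexts) and CC,
   locally nameless via de Bruijn indices (index 0 = innermost binder;
   a context is a list of types, head = most recent binding). *)
From Stdlib Require Import List Arith Relations.
Import ListNotations.

Inductive cterm : Type :=
| CVar : nat -> cterm
| CU   : nat -> cterm
| CPi  : cterm -> cterm -> cterm
| CApp : cterm -> cterm -> cterm
| CLam : cterm -> cterm -> cterm.

Definition uprn (xi : nat -> nat) : nat -> nat :=
  fun n => match n with 0 => 0 | S k => S (xi k) end.

Fixpoint cren (xi : nat -> nat) (t : cterm) : cterm :=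
  match t with
  | CVar n => CVar (xi n)
  | CU i => CU i
  | CPi A B => CPi (cren xi A) (cren (uprn xi) B)
  | CApp M N => CApp (cren xi M) (cren xi N)
  | CLam A M => CLam (cren xi A) (cren (uprn xi) M)
  end.

Definition cup (s : nat -> cterm) : nat -> cterm :=
  fun n => match n with 0 => CVar 0 | S k => cren S (s k) end.

Fixpoint csubst (s : nat -> cterm) (t : cterm) : cterm :=
  match t with
  | CVar n => s n
  | CU i => CU i
  | CPi A B => CPi (csubst s A) (csubst (cup s) B)
  | CApp M N => CApp (csubst s M) (csubst s N)
  | CLam A M => CLam (csubst s A) (csubst (cup s) M)
  end.

Definition cbeta (N : cterm) : nat -> cterm :=
  fun n => match n with 0 => N | S k => CVar k end.

(* simultaneous substitution of Ms = [M_1;...;M_n] for x_1..x_n, where x_n is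
   index 0 and x_1 is index n-1; free indices >= n are shifted down by n. *)
Definition csig (Ms : list cterm) : nat -> cterm :=
  fun k => nth k (rev Ms) (CVar (k - length Ms)).

Inductive cstep : cterm -> cterm -> Prop :=
| cs_beta : forall A M N, cstep (CApp (CLam A M) N) (csubst (cbeta N) M)
| cs_pi1 : forall A A' B, cstep A A' -> cstep (CPi A B) (CPi A' B)
| cs_pi2 : forall A B B', cstep B B' -> cstep (CPi A B) (CPi A B')
| cs_app1 : forall M M' N, cstep M M' -> cstep (CApp M N) (CApp M' N)
| cs_app2 : forall M N N', cstep N N' -> cstep (CApp M N) (CApp M N')
| cs_lam1 : forall A A' M, cstep A A' -> cstep (CLam A M) (CLam A' M)
| cs_lam2 : forall A M M', cstep M M' -> cstep (CLam A M) (CLam A M').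

Definition cstar : cterm -> cterm -> Prop := clos_refl_trans cterm cstep.

Definition label := nat.

Inductive dterm : Type :=
| DVar : nat -> dterm
| DU   : nat -> dterm
| DPi  : dterm -> dterm -> dterm
| DApp : dterm -> dterm -> dterm
| DLab : label -> list dterm -> dterm.

(* label declaration  l({x_1:A_1,...,x_n:A_n}, x:A |-> L : B).
   A_k lives in context x_1..x_{k-1}; A in x_1..x_n; L and B in x_1..x_n,x. *)
Record lentry : Type := mkLentry {
  lArgs  : list dterm;
  lArgTy : dterm;
  lBody  : dterm;
  lResTy : dterm
}.

(* label context; head = most recently added declaration *)
Definition lctx := list (label * lentry).

Fixpoint lookup (D : lctx) (l : label) : option lentry :=
  match D with
  | [] => None
  | (l', e) :: D' => if Nat.eqb l l' then Some e else lookup D' l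
  end.

Fixpoint dren (xi : nat -> nat) (t : dterm) : dterm :=
  match t with
  | DVar n => DVar (xi n)
  | DU i => DU i
  | DPi A B => DPi (dren xi A) (dren (uprn xi) B)
  | DApp M N => DApp (dren xi M) (dren xi N)
  | DLab l Ms => DLab l (map (dren xi) Ms)
  end.

Definition dup (s : nat -> dterm) : nat -> dterm :=
  fun n => match n with 0 => DVar 0 | S k => dren S (s k) end.

Fixpoint dsubst (s : nat -> dterm) (t : dterm) : dterm :=
  match t with
  | DVar n => s n
  | DU i => DU i
  | DPi A B => DPi (dsubst s A) (dsubst (dup s) B)
  | DApp M N => DApp (dsubst s M) (dsubst s N)
  | DLab l Ms => DLab l (map (dsubst s) Ms)
  end.

Definition dbeta (N : dterm) : nat -> dterm :=
  fun n => match n with 0 => N | S k => DVar k end.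

Definition dsig (Ms : list dterm) : nat -> dterm :=
  fun k => nth k (rev Ms) (DVar (k - length Ms)).

Inductive dstep (D : lctx) : dterm -> dterm -> Prop :=
| ds_lab : forall l e Ms N, lookup D l = Some e ->
    dstep D (DApp (DLab l Ms) N) (dsubst (dsig (Ms ++ [N])) (lBody e))
| ds_pi1 : forall A A' B, dstep D A A' -> dstep D (DPi A B) (DPi A' B)
| ds_pi2 : forall A B B', dstep D B B' -> dstep D (DPi A B) (DPi A B')
| ds_app1 : forall M M' N, dstep D M M' -> dstep D (DApp M N) (DApp M' N)
| ds_app2 : forall M N N', dstep D N N' -> dstep D (DApp M N) (DApp M N')
| ds_lab_arg : forall l Ms1 M M' Ms2, dstep D M M' ->
    dstep D (DLab l (Ms1 ++ M :: Ms2)) (DLab l (Ms1 ++ M' :: Ms2)).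

Definition dstar (D : lctx) : dterm -> dterm -> Prop :=
  clos_refl_trans dterm (dstep D).

Definition dconv (D : lctx) : dterm -> dterm -> Prop :=
  clos_refl_sym_trans dterm (dstep D).

Inductive wf_lctx : lctx -> Prop :=
| wfl_nil : wf_lctx []
| wfl_cons : forall D l e,
    wf_lctx D ->
    lookup D l = None ->
    wf_ctx D (lArgTy e :: rev (lArgs e)) ->
    dtyped D (lArgTy e :: rev (lArgs e)) (lBody e) (lResTy e) ->
    wf_lctx ((l, e) :: D)
with wf_ctx : lctx -> list dterm -> Prop :=
| wfc_nil : forall D, wf_lctx D -> wf_ctx D []
| wfc_cons : forall D G A i, wf_ctx D G -> dtyped D G A (DU i) -> wf_ctx D (A :: G)
with dtyped : lctx -> list dterm -> dterm -> dterm -> Prop :=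
| ty_var : forall D G n A, wf_ctx D G -> nth_error G n = Some A ->
    dtyped D G (DVar n) (dren (fun k => k + S n) A)
| ty_univ : forall D G i, wf_ctx D G -> dtyped D G (DU i) (DU (S i))
| ty_pi : forall D G A B i j, dtyped D G A (DU i) -> dtyped D (A :: G) B (DU j) ->
    dtyped D G (DPi A B) (DU (Nat.max i j))
| ty_app : forall D G M N A B, dtyped D G M (DPi A B) -> dtyped D G N A ->
    dtyped D G (DApp M N) (dsubst (dbeta N) B)
| ty_conv : forall D G M A B i, dtyped D G M A -> dtyped D G B (DU i) ->
    dconv D A B -> dtyped D G M B
| ty_lab : forall D G l e Ms, wf_ctx D G -> lookup D l = Some e ->
    length Ms = length (lArgs e) ->
    (forall k, k < length Ms ->
       dtyped D G (nth k Ms (DU 0))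
         (dsubst (dsig (firstn k Ms)) (nth k (lArgs e) (DU 0)))) ->
    dtyped D G (DLab l Ms)
      (DPi (dsubst (dsig Ms) (lArgTy e)) (dsubst (dup (dsig Ms)) (lResTy e))).

Fixpoint bgo (h : label -> list cterm -> cterm) (t : dterm) : cterm :=
  match t with
  | DVar n => CVar n
  | DU i => CU i
  | DPi A B => CPi (bgo h A) (bgo h B)
  | DApp M N => CApp (bgo h M) (bgo h N)
  | DLab l Ms => h l (map (bgo h) Ms)
  end.

(* Unknown labels (never
   occurring in well-typed terms) are sent to an arbitrary closed term. *)
Fixpoint bhandler (D : lctx) : label -> list cterm -> cterm :=
  match D with
  | [] => fun _ _ => CU 0
  | (l', e) :: D' => fun l Ms =>
      if Nat.eqb l l'
      then CLam (csubst (csig Ms) (bgo (bhandler D') (lArgTy e)))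
                (csubst (cup (csig Ms)) (bgo (bhandler D') (lBody e)))
      else bhandler D' l Ms
  end.

Definition bt (D : lctx) : dterm -> cterm := bgo (bhandler D).

(* Translating [l{Ms}] yields a λ-abstraction whose domain and body are the
   translations of the declaration of [l] with [Ms°] substituted for its
   parameters.  These translations mention only the parameters, so the
   translation commutes with renaming and substitution as long as every label
   is applied to exactly its declared number of arguments.  Hence the
   contraction [l{Ms} @ N ▷ L[Ms/xs, N/x]] becomes the β-step
   [(λx. L°[Ms°/xs]) N° ▷ L°[Ms°/xs, N°/x]], a step inside an argument of a
   label becomes a reduction of the substituted arguments, and the other steps
   are translated congruently.  Typing provides the invariants this needs
   (labels declared with their arity, declarations well scoped), and reduction
   preserves them. *)

From Stdlib Require Import List Arith Relations Lia.
Import ListNotations.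

Lemma cren_ext : forall t xi zeta,
  (forall k, xi k = zeta k) -> cren xi t = cren zeta t.
Proof.
  induction t; intros xi zeta H; simpl; f_equal; auto;
  (apply IHt2 || apply IHt1 || idtac); intros [|k]; simpl; auto.
Qed.

Lemma csubst_ext : forall t s r,
  (forall k, s k = r k) -> csubst s t = csubst r t.
Proof.
  induction t; intros s r H; simpl; f_equal; auto;
  (apply IHt2 || apply IHt1 || idtac); intros [|k]; simpl; auto; rewrite H; auto.
Qed.

Lemma cren_csubst_var : forall t xi, cren xi t = csubst (fun k => CVar (xi k)) t.
Proof.
  induction t; intros xi; simpl; f_equal; auto;
  (rewrite IHt2 || rewrite IHt1); apply csubst_ext; intros [|k]; reflexivity.
Qed.

Lemma csubst_var : forall t, csubst CVar t = t.
Proof.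
  induction t; simpl; f_equal; auto;
  rewrite <- IHt2 at 2; apply csubst_ext; intros [|k]; reflexivity.
Qed.

Lemma cren_cren : forall t xi zeta,
  cren xi (cren zeta t) = cren (fun k => xi (zeta k)) t.
Proof.
  induction t; intros xi zeta; simpl; f_equal; auto;
  (rewrite IHt2 || rewrite IHt1); apply cren_ext; intros [|k]; reflexivity.
Qed.

Lemma csubst_cren : forall t s xi,
  csubst s (cren xi t) = csubst (fun k => s (xi k)) t.
Proof.
  induction t; intros s xi; simpl; f_equal; auto;
  (rewrite IHt2 || rewrite IHt1); apply csubst_ext; intros [|k]; reflexivity.
Qed.

Lemma cren_csubst : forall t xi s,
  cren xi (csubst s t) = csubst (fun k => cren xi (s k)) t.
Proof.
  induction t; intros xi s; simpl; f_equal; auto;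
  (rewrite IHt2 || rewrite IHt1); apply csubst_ext; intros [|k]; simpl; auto;
  rewrite !cren_cren; apply cren_ext; reflexivity.
Qed.

Lemma csubst_csubst : forall t s r,
  csubst s (csubst r t) = csubst (fun k => csubst s (r k)) t.
Proof.
  induction t; intros s r; simpl; f_equal; auto;
  (rewrite IHt2 || rewrite IHt1); apply csubst_ext; intros [|k]; simpl; auto;
  rewrite csubst_cren, cren_csubst; apply csubst_ext; reflexivity.
Qed.

Lemma csubst_cbeta_cren_S : forall N t, csubst (cbeta N) (cren S t) = t.
Proof.
  intros N t; rewrite csubst_cren; apply csubst_var.
Qed.

Lemma cstep_csubst : forall t u, cstep t u ->
  forall s, cstep (csubst s t) (csubst s u).
Proof.
  induction 1; intros s; simpl; try (constructor; auto; fail).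
  replace (csubst s (csubst (cbeta N) M))
    with (csubst (cbeta (csubst s N)) (csubst (cup s) M)) by
    (rewrite !csubst_csubst; apply csubst_ext; intros [|k]; simpl;
     [reflexivity | rewrite csubst_cbeta_cren_S; reflexivity]).
  constructor.
Qed.

Lemma cstar_map : forall f : cterm -> cterm,
  (forall t u, cstep t u -> cstep (f t) (f u)) ->
  forall t u, cstar t u -> cstar (f t) (f u).
Proof.
  intros f Hf t u H; induction H.
  - apply rt_step; auto.
  - apply rt_refl.
  - eapply rt_trans; eauto.
Qed.

Lemma cstar_pi : forall A A' B B',
  cstar A A' -> cstar B B' -> cstar (CPi A B) (CPi A' B').
Proof.
  intros A A' B B' HA HB; apply rt_trans with (CPi A' B).
  - apply (cstar_map (fun X => CPi X B)); auto; intros; constructor; auto.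
  - apply (cstar_map (fun X => CPi A' X)); auto; intros; constructor; auto.
Qed.

Lemma cstar_app : forall M M' N N',
  cstar M M' -> cstar N N' -> cstar (CApp M N) (CApp M' N').
Proof.
  intros M M' N N' HM HN; apply rt_trans with (CApp M' N).
  - apply (cstar_map (fun X => CApp X N)); auto; intros; constructor; auto.
  - apply (cstar_map (fun X => CApp M' X)); auto; intros; constructor; auto.
Qed.

Lemma cstar_lam : forall A A' M M',
  cstar A A' -> cstar M M' -> cstar (CLam A M) (CLam A' M').
Proof.
  intros A A' M M' HA HM; apply rt_trans with (CLam A' M).
  - apply (cstar_map (fun X => CLam X M)); auto; intros; constructor; auto.
  - apply (cstar_map (fun X => CLam A' X)); auto; intros; constructor; auto.
Qed.

Lemma cstar_cren : forall t u xi, cstar t u -> cstar (cren xi t) (cren xi u).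
Proof.
  intros t u xi; apply cstar_map; intros t' u' H.
  rewrite !cren_csubst_var; apply cstep_csubst; auto.
Qed.

Lemma cstar_csubst_pointwise : forall t s r,
  (forall k, cstar (s k) (r k)) -> cstar (csubst s t) (csubst r t).
Proof.
  assert (Hup : forall s r, (forall k, cstar (s k) (r k)) ->
            forall k, cstar (cup s k) (cup r k)).
  { intros s r H [|k]; simpl; [apply rt_refl | apply cstar_cren, H]. }
  induction t; intros s r H; simpl.
  - apply H.
  - apply rt_refl.
  - apply cstar_pi; auto.
  - apply cstar_app; auto.
  - apply cstar_lam; auto.
Qed.

Inductive cscoped : nat -> cterm -> Prop :=
| csc_var : forall n k, k < n -> cscoped n (CVar k)
| csc_u : forall n i, cscoped n (CU i)
| csc_pi : forall n A B, cscoped n A -> cscoped (S n) B -> cscoped n (CPi A B)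
| csc_app : forall n M N, cscoped n M -> cscoped n N -> cscoped n (CApp M N)
| csc_lam : forall n A M, cscoped n A -> cscoped (S n) M -> cscoped n (CLam A M).

Lemma csubst_ext_scoped : forall n t, cscoped n t ->
  forall s r, (forall k, k < n -> s k = r k) -> csubst s t = csubst r t.
Proof.
  induction 1; intros s r Hsr; simpl; f_equal; auto;
  (apply IHcscoped2 || apply IHcscoped1 || idtac); intros [|k] Hk; simpl; auto;
  rewrite Hsr; auto; lia.
Qed.

Lemma cscoped_cren : forall n t, cscoped n t ->
  forall m xi, (forall k, k < n -> xi k < m) -> cscoped m (cren xi t).
Proof.
  induction 1; intros m xi Hxi; simpl; constructor; auto;
  (apply IHcscoped2 || apply IHcscoped1 || idtac); intros [|k] Hk; simpl; try lia;
  specialize (Hxi k); lia.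
Qed.

Lemma cscoped_csubst : forall n t, cscoped n t ->
  forall m s, (forall k, k < n -> cscoped m (s k)) -> cscoped m (csubst s t).
Proof.
  assert (Hup : forall n m s, (forall k, k < n -> cscoped m (s k)) ->
            forall k, k < S n -> cscoped (S m) (cup s k)).
  { intros n m s H [|k] Hk; simpl.
    - constructor; lia.
    - apply cscoped_cren with m; [apply H | intros]; lia. }
  induction 1; intros m s Hs; simpl; try constructor; eauto.
Qed.

Lemma csig_map : forall f Ms k,
  k < length Ms -> csig (map f Ms) k = f (csig Ms k).
Proof.
  intros f Ms k Hk; unfold csig. rewrite <- map_rev, length_map.
  rewrite (nth_indep _ _ (f (CVar (k - length Ms)))); [apply map_nth |].
  rewrite length_map, length_rev; auto.
Qed.

Lemma cscoped_csig : forall m Ms k,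
  Forall (cscoped m) Ms -> k < length Ms -> cscoped m (csig Ms k).
Proof.
  intros m Ms k HMs Hk; unfold csig.
  apply Forall_rev in HMs; rewrite Forall_nth in HMs.
  apply HMs; rewrite length_rev; auto.
Qed.

Lemma cstar_csig_app : forall Ms1 Ms2 M M' k, cstar M M' ->
  cstar (csig (Ms1 ++ M :: Ms2) k) (csig (Ms1 ++ M' :: Ms2) k).
Proof.
  intros Ms1 Ms2 M M' k H; unfold csig.
  rewrite !length_app, !rev_app_distr; simpl; rewrite <- !app_assoc; simpl.
  generalize (CVar (k - (length Ms1 + S (length Ms2)))) (rev Ms1) (rev Ms2).
  intros d L1 L2; revert k; induction L2 as [|X L2 IH]; intros [|k]; simpl;
  auto; apply rt_refl.
Qed.

Lemma csubst_cbeta_cup_csig : forall N Ms k,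
  csubst (cbeta N) (cup (csig Ms) k) = csig (Ms ++ [N]) k.
Proof.
  intros N Ms [|k]; unfold csig; simpl; rewrite rev_app_distr; [reflexivity |].
  rewrite csubst_cbeta_cren_S, length_app, Nat.add_1_r; reflexivity.
Qed.

Fixpoint dterm_nested_ind (P : dterm -> Prop)
  (HVar : forall n, P (DVar n)) (HU : forall i, P (DU i))
  (HPi : forall A B, P A -> P B -> P (DPi A B))
  (HApp : forall M N, P M -> P N -> P (DApp M N))
  (HLab : forall l Ms, Forall P Ms -> P (DLab l Ms)) (t : dterm) : P t :=
  let IH := dterm_nested_ind P HVar HU HPi HApp HLab in
  match t with
  | DVar n => HVar n
  | DU i => HU i
  | DPi A B => HPi A B (IH A) (IH B)
  | DApp M N => HApp M N (IH M) (IH N)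
  | DLab l Ms => HLab l Ms
      ((fix IHs (Ms : list dterm) : Forall P Ms :=
          match Ms with
          | [] => Forall_nil P
          | M :: Ms' => Forall_cons M (IH M) (IHs Ms')
          end) Ms)
  end.

(* Arity matters: only when [Ms] fills exactly the parameters of [l] does the
   translation of [l{Ms}] commute with substitution. *)
Inductive labelled (D : lctx) : dterm -> Prop :=
| lab_var : forall n, labelled D (DVar n)
| lab_u : forall i, labelled D (DU i)
| lab_pi : forall A B, labelled D A -> labelled D B -> labelled D (DPi A B)
| lab_app : forall M N, labelled D M -> labelled D N -> labelled D (DApp M N)
| lab_lab : forall l e Ms, lookup D l = Some e -> length Ms = length (lArgs e) ->
    Forall (labelled D) Ms -> labelled D (DLab l Ms).

Inductive dscoped : nat -> dterm -> Prop :=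
| dsc_var : forall n k, k < n -> dscoped n (DVar k)
| dsc_u : forall n i, dscoped n (DU i)
| dsc_pi : forall n A B, dscoped n A -> dscoped (S n) B -> dscoped n (DPi A B)
| dsc_app : forall n M N, dscoped n M -> dscoped n N -> dscoped n (DApp M N)
| dsc_lab : forall n l Ms, Forall (dscoped n) Ms -> dscoped n (DLab l Ms).

Lemma labelled_dren : forall D t xi, labelled D t -> labelled D (dren xi t).
Proof.
  intros D t; induction t using dterm_nested_ind; intros xi Ht; inversion Ht; subst;
  simpl; econstructor; eauto.
  - rewrite length_map; auto.
  - apply Forall_map; rewrite Forall_forall in *; auto.
Qed.

Lemma labelled_dsubst : forall D t s,
  labelled D t -> (forall k, labelled D (s k)) -> labelled D (dsubst s t).
Proof.
  intros D t; induction t using dterm_nested_ind; intros s Ht Hs; inversion Ht; subst;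
  simpl; auto; econstructor; eauto.
  - apply IHt2; auto; intros [|k]; simpl; [constructor | apply labelled_dren; auto].
  - rewrite length_map; auto.
  - apply Forall_map; rewrite Forall_forall in *; auto.
Qed.

Lemma labelled_dsig : forall D Ms k,
  Forall (labelled D) Ms -> labelled D (dsig Ms k).
Proof.
  intros D Ms k HMs; unfold dsig.
  destruct (Nat.lt_ge_cases k (length Ms)) as [Hk | Hk].
  - apply Forall_rev in HMs; rewrite Forall_nth in HMs.
    apply HMs; rewrite length_rev; auto.
  - rewrite nth_overflow by (rewrite length_rev; auto); constructor.
Qed.

Lemma labelled_weaken : forall D l e t,
  lookup D l = None -> labelled D t -> labelled ((l, e) :: D) t.
Proof.
  intros D l e t Hl; induction t using dterm_nested_ind; intros Ht; inversion Ht; subst;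
  try (constructor; auto; fail).
  apply lab_lab with e0; auto.
  - simpl; destruct (Nat.eqb_spec l0 l); congruence.
  - rewrite Forall_forall in *; auto.
Qed.

Lemma bt_weaken : forall D l e t,
  lookup D l = None -> labelled D t -> bt ((l, e) :: D) t = bt D t.
Proof.
  intros D l e t Hl; unfold bt; induction t using dterm_nested_ind; intros Ht;
  inversion Ht; subst; simpl; f_equal; auto.
  destruct (Nat.eqb_spec l0 l); [congruence |].
  f_equal; apply map_ext_Forall; rewrite Forall_forall in *; auto.
Qed.

Fixpoint lctx_ok (D : lctx) : Prop :=
  match D with
  | [] => True
  | (l, e) :: D' => lctx_ok D' /\ lookup D' l = None /\
      labelled D' (lArgTy e) /\ labelled D' (lBody e) /\
      dscoped (length (lArgs e)) (lArgTy e) /\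
      dscoped (S (length (lArgs e))) (lBody e)
  end.

(* [bhandler] translates the declaration of [l] relative to the part of [D]
   preceding it; by [bt_weaken] this agrees with the translation relative to
   all of [D]. *)
Record label_translated (D : lctx) (l : label) (e : lentry) : Prop := {
  arg_ty_labelled : labelled D (lArgTy e);
  body_labelled : labelled D (lBody e);
  arg_ty_scoped : cscoped (length (lArgs e)) (bt D (lArgTy e));
  body_scoped : cscoped (S (length (lArgs e))) (bt D (lBody e));
  bhandler_eq : forall Ms, bhandler D l Ms =
    CLam (csubst (csig Ms) (bt D (lArgTy e))) (csubst (cup (csig Ms)) (bt D (lBody e)))
}.

Definition bhandler_spec (D : lctx) : Prop :=
  forall l e, lookup D l = Some e -> label_translated D l e.

Lemma bt_dsig : forall D Ms k, bt D (dsig Ms k) = csig (map (bt D) Ms) k.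
Proof.
  intros D Ms k; unfold dsig, csig.
  rewrite <- map_rev, length_map.
  change (CVar (k - length Ms)) with (bt D (DVar (k - length Ms))).
  unfold bt; rewrite map_nth; reflexivity.
Qed.

Section Translation.

Variable D : lctx.
Hypothesis HD : bhandler_spec D.

Lemma bt_scoped : forall t m, labelled D t -> dscoped m t -> cscoped m (bt D t).
Proof.
  unfold bt; intros t; induction t using dterm_nested_ind; intros m Ht Hm;
  inversion Ht; subst; inversion Hm; subst; simpl; try (constructor; auto; fail).
  destruct (HD l e) as [_ _ HA HL Heq]; auto.
  assert (HMs : forall k, k < length Ms -> cscoped m (csig (map (bgo (bhandler D)) Ms) k)).
  { intros k Hk; apply cscoped_csig; [| rewrite length_map; auto].
    apply Forall_map; rewrite Forall_forall in *; auto. }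
  rewrite Heq; constructor.
  - apply cscoped_csubst with (length (lArgs e)); auto.
    intros k Hk; apply HMs; lia.
  - apply cscoped_csubst with (S (length (lArgs e))); auto.
    intros [|k] Hk; simpl; [constructor; lia |].
    apply cscoped_cren with m; [apply HMs | intros]; lia.
Qed.

Lemma bhandler_csubst : forall l e Ms s,
  lookup D l = Some e -> length Ms = length (lArgs e) ->
  bhandler D l (map (csubst s) Ms) = csubst s (bhandler D l Ms).
Proof.
  intros l e Ms s Hl Hlen.
  destruct (HD l e Hl) as [_ _ HA HL Heq]; rewrite !Heq; simpl; f_equal.
  - rewrite csubst_csubst; apply csubst_ext_scoped with (length (lArgs e)); auto.
    intros k Hk; apply csig_map; lia.
  - rewrite csubst_csubst; apply csubst_ext_scoped with (S (length (lArgs e))); auto.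
    intros [|k] Hk; simpl; auto.
    rewrite csubst_cren, csig_map, cren_csubst by lia.
    apply csubst_ext; reflexivity.
Qed.

Lemma bt_dren : forall t xi, labelled D t -> bt D (dren xi t) = cren xi (bt D t).
Proof.
  unfold bt; intros t; induction t using dterm_nested_ind; intros xi Ht;
  inversion Ht; subst; simpl; f_equal; auto.
  rewrite cren_csubst_var, <- bhandler_csubst with (e := e);
    [| auto | rewrite length_map; auto].
  f_equal; rewrite !map_map; apply map_ext_Forall.
  rewrite Forall_forall in *; intros M HM; rewrite H; auto; apply cren_csubst_var.
Qed.

Lemma bt_dsubst : forall t s, labelled D t -> (forall k, labelled D (s k)) ->
  bt D (dsubst s t) = csubst (fun k => bt D (s k)) (bt D t).
Proof.
  unfold bt; intros t; induction t using dterm_nested_ind; intros s Ht Hs;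
  inversion Ht; subst; simpl; try (f_equal; auto; fail).
  - f_equal; auto. rewrite IHt2; auto.
    + apply csubst_ext; intros [|k]; simpl; auto; apply bt_dren; auto.
    + intros [|k]; simpl; [constructor | apply labelled_dren; auto].
  - rewrite <- bhandler_csubst with (e := e); [| auto | rewrite length_map; auto].
    f_equal; rewrite !map_map; apply map_ext_Forall.
    rewrite Forall_forall in *; auto.
Qed.

Lemma bt_label_redex : forall l e Ms N,
  lookup D l = Some e -> Forall (labelled D) Ms -> labelled D N ->
  cstep (bt D (DApp (DLab l Ms) N)) (bt D (dsubst (dsig (Ms ++ [N])) (lBody e))).
Proof.
  intros l e Ms N Hl HMs HN.
  destruct (HD l e Hl) as [_ HL _ _ Heq].
  rewrite bt_dsubst by (auto; intros k; apply labelled_dsig, Forall_app; auto).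
  replace (csubst _ (bt D (lBody e)))
    with (csubst (cbeta (bt D N)) (csubst (cup (csig (map (bt D) Ms))) (bt D (lBody e)))).
  - change (bt D (DApp (DLab l Ms) N)) with (CApp (bhandler D l (map (bt D) Ms)) (bt D N)).
    rewrite Heq; apply cs_beta.
  - rewrite csubst_csubst; apply csubst_ext; intros k.
    rewrite csubst_cbeta_cup_csig, bt_dsig, map_app; reflexivity.
Qed.

Lemma cstar_bhandler_app : forall l e Ms1 Ms2 M M',
  lookup D l = Some e -> cstar M M' ->
  cstar (bhandler D l (Ms1 ++ M :: Ms2)) (bhandler D l (Ms1 ++ M' :: Ms2)).
Proof.
  intros l e Ms1 Ms2 M M' Hl HM.
  destruct (HD l e Hl) as [_ _ _ _ Heq]; rewrite !Heq.
  apply cstar_lam; apply cstar_csubst_pointwise.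
  - intros k; apply cstar_csig_app; auto.
  - intros [|k]; simpl; [apply rt_refl | apply cstar_cren, cstar_csig_app; auto].
Qed.

Lemma labelled_dstep : forall t u, dstep D t u -> labelled D t -> labelled D u.
Proof.
  induction 1 as [l e Ms N Hl | | | | | l Ms1 M M' Ms2 HM IH]; intros Ht;
    inversion Ht as [| | | ? ? Hfun HN | ? e' ? Hl' Hlen HMs]; subst;
    try (constructor; auto; fail).
  - apply labelled_dsubst; [apply (HD l e Hl) |].
    inversion Hfun; subst; intros k; apply labelled_dsig, Forall_app; auto.
  - apply Forall_app in HMs as [HMs1 HMs2]; inversion HMs2; subst.
    apply lab_lab with e'; auto.
    + rewrite length_app in *; auto.
    + apply Forall_app; auto.
Qed.

Lemma bt_dstep : forall t u, dstep D t u -> labelled D t -> cstar (bt D t) (bt D u).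
Proof.
  induction 1 as [l e Ms N Hl | | | | | l Ms1 M M' Ms2 HM IH]; intros Ht;
    inversion Ht as [| | | ? ? Hfun HN | ? e' ? Hl' Hlen HMs]; subst;
    try (first [apply cstar_pi | apply cstar_app]; auto; apply rt_refl).
  - inversion Hfun; subst; apply rt_step; eapply bt_label_redex; eauto.
  - apply Forall_app in HMs as [_ HMs2]; inversion HMs2; subst.
    unfold bt; simpl; rewrite !map_app; eapply cstar_bhandler_app; eauto.
Qed.

Lemma labelled_dstar : forall t u, dstar D t u -> labelled D t -> labelled D u.
Proof.
  induction 1; eauto using labelled_dstep.
Qed.

Lemma bt_dstar : forall t u, dstar D t u -> labelled D t -> cstar (bt D t) (bt D u).
Proof.
  induction 1 as [t u Hstep | t | t v u Htv IHtv Hvu IHvu]; intros Ht.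
  - apply bt_dstep; auto.
  - apply rt_refl.
  - apply rt_trans with (bt D v); [apply IHtv; auto |].
    apply IHvu, labelled_dstar with t; auto.
Qed.

End Translation.

Lemma lctx_ok_bhandler_spec : forall D, lctx_ok D -> bhandler_spec D.
Proof.
  induction D as [|[l e] D IH]; intros Hok l' e' Hl'; simpl in Hl'; [discriminate |].
  destruct Hok as [Hok [Hfresh [HA [HL [HsA HsL]]]]].
  specialize (IH Hok).
  destruct (Nat.eqb_spec l' l) as [-> | Hne].
  - injection Hl' as <-.
    constructor; try (apply labelled_weaken; auto);
      rewrite ?bt_weaken by auto; try (apply bt_scoped; auto).
    intros Ms; simpl; rewrite Nat.eqb_refl; reflexivity.
  - destruct (IH l' e' Hl') as [HA' HL' HsA' HsL' Heq].
    constructor; try (apply labelled_weaken; auto); rewrite ?bt_weaken by auto; auto.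
    intros Ms; simpl; rewrite (proj2 (Nat.eqb_neq _ _) Hne); apply Heq.
Qed.

Scheme wf_lctx_mind := Induction for wf_lctx Sort Prop
with wf_ctx_mind := Induction for wf_ctx Sort Prop
with dtyped_mind := Induction for dtyped Sort Prop.
Combined Scheme typing_mutind from wf_lctx_mind, wf_ctx_mind, dtyped_mind.

Lemma typing_invariants :
  (forall D, wf_lctx D -> lctx_ok D) /\
  (forall D G, wf_ctx D G -> lctx_ok D /\
     forall A G', G = A :: G' -> labelled D A /\ dscoped (length G') A) /\
  (forall D G t T, dtyped D G t T -> lctx_ok D /\ labelled D t /\ dscoped (length G) t).
Proof.
  apply typing_mutind; simpl.
  - exact I.
  - intros D l e _ Hok Hfresh _ [_ Hctx] _ [_ [HL HsL]].
    destruct (Hctx _ _ eq_refl) as [HA HsA].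
    rewrite length_rev in HsA, HsL; auto 10.
  - intros D _ Hok; split; [auto | discriminate].
  - intros D G A i _ [Hok _] _ [_ [HA HsA]]; split; [auto |].
    intros A' G' [= <- <-]; auto.
  - intros D G n A _ [Hok _] Hn; repeat split; [auto | constructor |].
    constructor; apply nth_error_Some; congruence.
  - intros D G i _ [Hok _]; repeat split; auto; constructor.
  - intros D G A B i j _ [Hok [HA HsA]] _ [_ [HB HsB]]; repeat split; auto; constructor; auto.
  - intros D G M N A B _ [Hok [HM HsM]] _ [_ [HN HsN]]; repeat split; auto; constructor; auto.
  - intros D G M A B i _ [Hok [HM HsM]] _ _ _; auto.
  - intros D G l e Ms _ [Hok _] Hl Hlen _ HMs; repeat split; auto.
    + apply lab_lab with e; auto.
      apply Forall_nth; intros k d Hk; rewrite nth_indep with (d' := DU 0) by auto.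
      apply HMs; auto.
    + constructor; apply Forall_nth; intros k d Hk; rewrite nth_indep with (d' := DU 0) by auto.
      apply HMs; auto.
Qed.

Theorem lemma3p20 : forall (D : lctx) (G : list dterm) (M A N : dterm),
  dtyped D G M A -> dstar D M N -> cstar (bt D M) (bt D N).
Proof.
  intros D G M A N Htyped Hred.
  destruct typing_invariants as [_ [_ Htyping]].
  destruct (Htyping D G M A Htyped) as [Hok [Hlab _]].
  exact (bt_dstar D (lctx_ok_bhandler_spec D Hok) M N Hred Hlab).
Qed.
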